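(* Let $m\ge1$, $n\ge1$, let $K\in\{\mathbb{R},\mathbb{C}\}$, and let $\mathcal{Z}$ be either $\mathbb{Z}^m$ or $\{t\in\mathbb{Z}^m\mid t\ge t_1\}$ for some $t_1\in\mathbb{Z}^m$. Let $T=(T^1,\dots,T^m)\in\mathbb{N}^m$, $T\ne0$. Let $A_\alpha\colon\mathcal{Z}\to\mathcal{M}_n(K)$, $\alpha\in\{1,\dots,m\}$, satisfy $$A_\alpha(t+1_\beta)A_\beta(t)=A_\beta(t+1_\alpha)A_\alpha(t),\quad \forall t\in\mathcal{Z},\ \forall\alpha,\beta,$$ and suppose each $A_\alpha$ is periodic of period $T$, i.e. $A_\alpha(t+T)=A_\alpha(t)$ for all $t\in\mathcal{Z}$. Let $C(t)=\chi(t+T,t)$ for $t\in\mathcal{Z}$. Then: (a) for every $\alpha$ and $k\in\mathbb{N}$, $C_{\alpha,k}(t+T)=C_{\alpha,k}(t)$ for all $t\in\mathcal{Z}$; (b) $\chi(t+T,s)=\chi(t,s)\,C(s)$ for all $t,s\in\mathcal{Z}$ with $t\ge s$; (c) for all $s\in\mathcal{Z}$, $$C(s)=\left[\prod_{\alpha=1}^{m-1}C_{\alpha,T^\alpha}(s^1,\dots,s^\alpha,s^{\alpha+1}+T^{\alpha+1},\dots,s^m+T^m)\right]C_{m,T^m}(s^1,\dots,s^m),$$ where the product is ordered with $\alpha=1$ leftmost.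
   Context: $\mathbb{N}=\{0,1,2,\dots\}$; $1_\alpha\in\mathbb{Z}^m$ has $1$ in position $\alpha$ and $0$ elsewhere; $s\le t$ in $\mathbb{Z}^m$ means $s^\alpha\le t^\alpha$ for all $\alpha$. $C_{\alpha,0}(t)=I_n$ and $C_{\alpha,k}(t)=A_\alpha(t+(k-1)1_\alpha)\cdots A_\alpha(t+1_\alpha)A_\alpha(t)$ for $k\ge1$. Under the compatibility relations, for each $s\in\mathcal{Z}$ there is a unique $\chi(\cdot,s)\colon\{t\in\mathcal{Z}\mid t\ge s\}\to\mathcal{M}_n(K)$ with $\chi(s,s)=I_n$ and $\chi(t+1_\alpha,s)=A_\alpha(t)\chi(t,s)$ for all $t\ge s$ and all $\alpha$ (the transition matrix). *)

From HB Require Import structures.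
From mathcomp Require Import all_boot all_order all_algebra.
Set Implicit Arguments. Unset Strict Implicit. Unset Printing Implicit Defensive.
Import Order.TTheory GRing.Theory Num.Theory.
Local Open Scope ring_scope.

(* Points of Z^m, indexed by 'I_m (coordinate alpha = 1..m in the paper is
   the ordinal alpha-1 here). *)
Notation pt m := {ffun 'I_m -> int}.

Definition vadd m (s t : pt m) : pt m := [ffun b => s b + t b].
Definition unitv m (a : 'I_m) : pt m := [ffun b => ((b == a) : nat)%:Z].
Definition natv m (T : 'I_m -> nat) : pt m := [ffun b => (T b)%:Z].
Definition leV m (s t : pt m) : Prop := forall b, s b <= t b.

(* The domain Z: None encodes Z^m, Some t1 encodes {t in Z^m | t >= t1}. *)
Definition inZ m (dom : option (pt m)) (t : pt m) : Prop :=
  match dom with None => True | Some t1 => leV t1 t end.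

Fixpoint Cak (K : nzRingType) m n (A : 'I_m -> pt m -> 'M[K]_n)
    (a : 'I_m) (k : nat) (t : pt m) : 'M[K]_n :=
  match k with
  | 0 => 1%:M
  | k'.+1 => A a (vadd t [ffun b => (k' * (b == a))%:Z]) *m Cak A a k' t
  end.

Definition shiftAfter m (s : pt m) (T : 'I_m -> nat) (a : 'I_m) : pt m :=
  [ffun b : 'I_m => if (a < b)%N then s b + (T b)%:Z else s b].

From mathcomp Require Import all_boot all_order all_algebra.
From mathcomp Require Import zify.
Set Implicit Arguments. Unset Strict Implicit. Unset Printing Implicit Defensive.
Import Order.TTheory GRing.Theory Num.Theory.
Local Open Scope ring_scope.

(* Going from [r] to [r + d] one axis at a time, first along the last axis
   and last along the first, factors [chi (r + d) s] as the ordered product of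
   the [C_{a, d a}] taken at the intermediate corners [shiftFrom r d a.+1],
   times [chi r s]. With [d = T] and [r = s] this is (c); (a) is immediate
   from the periodicity of each factor of [C_{a,k}], and (b) follows by
   comparing the factorisations of [chi (t + T) s] through [s + T] and of
   [chi t s] through [s], whose corners differ by [T]. *)

Lemma inZ_leV m (dom : option (pt m)) s t : inZ dom s -> leV s t -> inZ dom t.
Proof. by case: dom => //= t1 le_t1s le_st b; exact: le_trans (le_t1s b) (le_st b). Qed.

Lemma leVxx m (s : pt m) : leV s s.
Proof. by move=> b; exact: lexx. Qed.

Lemma leV_vadd m (s r w : pt m) :
  leV s r -> (forall b, 0 <= w b) -> leV s (vadd r w).
Proof. by move=> le_sr w_ge0 b; rewrite ffunE; have := le_sr b; have := w_ge0 b; lia. Qed.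

Lemma vaddA m (r u w : pt m) : vadd r (vadd u w) = vadd (vadd r u) w.
Proof. by apply/ffunP=> b; rewrite !ffunE addrA. Qed.

Lemma natv_ge0 m (d : 'I_m -> nat) b : 0 <= natv d b.
Proof. by rewrite ffunE. Qed.

(* [k 1_a], written as in the definition of [Cak] so that the two are convertible. *)
Definition axisv m (a : 'I_m) (k : nat) : pt m := [ffun b => (k * (b == a))%:Z].

Lemma axisv_ge0 m (a : 'I_m) k b : 0 <= axisv a k b.
Proof. by rewrite ffunE. Qed.

Lemma axisvS m (a : 'I_m) k : axisv a k.+1 = vadd (axisv a k) (unitv a).
Proof. by apply/ffunP=> b; rewrite !ffunE; case: eqP => _ /=; lia. Qed.

(* [shiftAfter s T a] is convertible to [shiftFrom s T a.+1]. *)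
Definition shiftFrom m (r : pt m) (d : 'I_m -> nat) (j : nat) : pt m :=
  [ffun b : 'I_m => if (j <= b)%N then r b + (d b)%:Z else r b].

Lemma leV_shiftFrom m (s r : pt m) d j : leV s r -> leV s (shiftFrom r d j).
Proof. by move=> le_sr b; rewrite ffunE; have := le_sr b; case: ifP => _; lia. Qed.

Lemma shiftFrom0 m (r : pt m) d : shiftFrom r d 0 = vadd r (natv d).
Proof. by apply/ffunP=> b; rewrite !ffunE. Qed.

Lemma shiftFrom_ge m (r : pt m) d j : (m <= j)%N -> shiftFrom r d j = r.
Proof. by move=> le_mj; apply/ffunP=> b; rewrite ffunE leqNgt (leq_trans (ltn_ord b)). Qed.

Lemma shiftFrom_ord m (r : pt m) d (a : 'I_m) :
  shiftFrom r d a = vadd (shiftFrom r d a.+1) (axisv a (d a)).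
Proof.
apply/ffunP=> b; rewrite !ffunE; case: (ltngtP a b) => [lt_ab|lt_ba|/val_inj->].
- by rewrite -val_eqE /= (gtn_eqF lt_ab) muln0 addr0.
- by rewrite -val_eqE /= (ltn_eqF lt_ba) muln0 addr0.
- by rewrite eqxx muln1.
Qed.

Lemma shiftFrom_vadd m (r w : pt m) d j :
  shiftFrom (vadd r w) d j = vadd (shiftFrom r d j) w.
Proof. by apply/ffunP=> b; rewrite !ffunE; case: ifP => _; lia. Qed.

Section Periodicity.

Variables (K : nzRingType) (m n : nat) (dom : option (pt m)).
Variables (A : 'I_m -> pt m -> 'M[K]_n) (T : 'I_m -> nat).
Hypothesis A_periodic : forall a t, inZ dom t -> A a (vadd t (natv T)) = A a t.

Lemma Cak_periodic a k t : inZ dom t -> Cak A a k (vadd t (natv T)) = Cak A a k t.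
Proof.
move=> Zt; elim: k => [//|k IHk] /=; rewrite IHk.
have -> : vadd (vadd t (natv T)) (axisv a k) = vadd (vadd t (axisv a k)) (natv T).
  by apply/ffunP=> b; rewrite !ffunE; lia.
rewrite A_periodic //; apply: inZ_leV Zt _.
exact: leV_vadd (leVxx t) (@axisv_ge0 _ a k).
Qed.

End Periodicity.

Section TransitionMatrix.

Variables (K : nzRingType) (m n : nat) (dom : option (pt m)).
Variables (A : 'I_m -> pt m -> 'M[K]_n) (chi : pt m -> pt m -> 'M[K]_n).
Hypothesis chiS : forall s t a, inZ dom s -> leV s t ->
  chi (vadd t (unitv a)) s = A a t *m chi t s.

Lemma chi_axisv s t a k : inZ dom s -> leV s t ->
  chi (vadd t (axisv a k)) s = Cak A a k t *m chi t s.
Proof.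
move=> Zs le_st; elim: k => [|k IHk].
  by rewrite mul1mx; congr chi; apply/ffunP=> b; rewrite !ffunE mul0n addr0.
rewrite axisvS vaddA chiS ?IHk ?mulmxA //.
exact: leV_vadd le_st (@axisv_ge0 _ a k).
Qed.

(* Ordered products over [j <= i < m] need a [nat]-indexed factor. *)
Let corner_factor r d (i : nat) : 'M[K]_n :=
  if insub i is Some a then Cak A a (d a) (shiftFrom r d a.+1) else 1%:M.

Lemma chi_shiftFrom s r d j : inZ dom s -> leV s r -> (j <= m)%N ->
  chi (shiftFrom r d j) s
  = (\big[mulmx/1%:M]_(j <= i < m) corner_factor r d i) *m chi r s.
Proof.
move=> Zs le_sr /subnK; move: (m - j)%N => k; elim: k j => [|k IHk] j def_m.
  by rewrite big_geq ?mul1mx ?shiftFrom_ge // -def_m.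
have lt_jm : (j < m)%N by rewrite -def_m addSnnS leq_addl.
rewrite big_ltn // -mulmxA -IHk; last by rewrite -addSnnS.
have -> : j = Ordinal lt_jm by [].
by rewrite /corner_factor valK shiftFrom_ord chi_axisv //; exact: leV_shiftFrom.
Qed.

Lemma chi_vadd_natv s r d : inZ dom s -> leV s r ->
  chi (vadd r (natv d)) s
  = (\big[mulmx/1%:M]_(a < m) Cak A a (d a) (shiftFrom r d a.+1)) *m chi r s.
Proof.
move=> Zs le_sr; rewrite -shiftFrom0 chi_shiftFrom // big_mkord.
by congr mulmx; apply: eq_bigr => a _; rewrite /corner_factor valK.
Qed.

Hypothesis chi_id : forall s, inZ dom s -> chi s s = 1%:M.
Variable T : 'I_m -> nat.
Hypothesis A_periodic : forall a t, inZ dom t -> A a (vadd t (natv T)) = A a t.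

Lemma chi_vadd_period t s : inZ dom s -> leV s t ->
  chi (vadd t (natv T)) s = chi t s *m chi (vadd s (natv T)) s.
Proof.
move=> Zs le_st; pose d b := `|t b - s b|%N.
have def_t : t = vadd s (natv d).
  by apply/ffunP=> b; rewrite !ffunE /d gez0_abs ?subr_ge0 // subrKC.
have le_ssT := leV_vadd (leVxx s) (natv_ge0 T).
have -> : vadd t (natv T) = vadd (vadd s (natv T)) (natv d).
  by apply/ffunP=> b; rewrite !ffunE /d gez0_abs ?subr_ge0 // addrAC subrKC.
rewrite def_t !chi_vadd_natv // chi_id // !mulmx1; congr mulmx.
apply: eq_bigr => a _; rewrite shiftFrom_vadd (Cak_periodic A_periodic) //.
exact: inZ_leV Zs (leV_shiftFrom _ _ (leVxx s)).
Qed.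

End TransitionMatrix.

Theorem proposition2p16 (K : numFieldType) (m n : nat)
    (dom : option (pt m)) (T : 'I_m -> nat)
    (A : 'I_m -> pt m -> 'M[K]_n)
    (chi : pt m -> pt m -> 'M[K]_n) :
  (0 < m)%N -> (0 < n)%N ->
  (exists a, T a != 0%N) ->
  (* compatibility relations *)
  (forall t a b, inZ dom t ->
     A a (vadd t (unitv b)) *m A b t = A b (vadd t (unitv a)) *m A a t) ->
  (* periodicity of period T *)
  (forall a t, inZ dom t -> A a (vadd t (natv T)) = A a t) ->
  (* chi is the transition matrix *)
  (forall s, inZ dom s -> chi s s = 1%:M) ->
  (forall s t a, inZ dom s -> leV s t ->
     chi (vadd t (unitv a)) s = A a t *m chi t s) ->
  let C := fun t => chi (vadd t (natv T)) t in
  (* (a) *)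
  (forall a k t, inZ dom t -> Cak A a k (vadd t (natv T)) = Cak A a k t) /\
  (* (b) *)
  (forall t s, inZ dom s -> leV s t ->
     chi (vadd t (natv T)) s = chi t s *m C s) /\
  (* (c) *)
  (forall s, inZ dom s ->
     C s = \big[mulmx/1%:M]_(a < m) Cak A a (T a) (shiftAfter s T a)).
Proof.
move=> _ _ _ _ A_periodic chi_id chiS C.
split; first exact: Cak_periodic.
split; first exact: (chi_vadd_period chiS chi_id A_periodic).
by move=> s Zs; rewrite /C (chi_vadd_natv chiS) ?chi_id ?mulmx1 //; exact: leVxx.
Qed.
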